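(* Let $n\ge2$, $k\in\{1,\ldots,n\}$, $r\in\mathbb{R}$, and $x^0\in\mathbb{R}^n$ with $x^0_1\ge\cdots\ge x^0_n$ and $\sum_{i=1}^k x^0_i>r$. Beginning from $(k_0,k_1)=(k-1,k)$, every index pair $(k_0,k_1)$ on the trajectory generated by the ESGS procedure satisfies $\mathtt{kkt}_1(k_0,k_1)$, $\mathtt{kkt}_3(k_0,k_1)$ and $\mathtt{kkt}_4(k_0,k_1)$.
   Context: Conventions: $x^0_0:=+\infty$, $x^0_{n+1}:=-\infty$. For $k_0\in\{0,\ldots,k-1\}$ and $k_1\in\{k,\ldots,n\}$ define $S_\alpha=\sum_{i=1}^{k_0}x^0_i-r$, $S_\beta=\sum_{i=k_0+1}^{k_1}x^0_i$, $\rho=k_0(k_1-k_0)+(k-k_0)^2$, $\theta(k_0,k_1)=(k_0S_\beta-(k-k_0)S_\alpha)/\rho$, $\lambda(k_0,k_1)=((k-k_0)S_\beta+(k_1-k_0)S_\alpha)/\rho$. KKT indicators: $\mathtt{kkt}_1$: $\lambda>0$; $\mathtt{kkt}_2$: $x^0_{k_0}>\theta+\lambda$; $\mathtt{kkt}_3$: $\theta+\lambda\ge x^0_{k_0+1}$; $\mathtt{kkt}_4$: $x^0_{k_1}\ge\theta$; $\mathtt{kkt}_5$: $\theta>x^0_{k_1+1}$ (all evaluated at $(k_0,k_1)$). ESGS trajectory: start at $(k_0,k_1)=(k-1,k)$ and repeat: if $\mathtt{kkt}_2\wedge\mathtt{kkt}_5$ holds, stop; else if $\mathtt{kkt}_2$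 holds, set $k_1\gets k_1+1$; else set $k_0\gets k_0-1$. *)

(* Vectors x^0 in R^n are modelled as x : nat -> R, of which
   only the entries x 1, ..., x n are meaningful (1-based indexing as in the
   paper). The conventions x^0_0 = +oo and x^0_{n+1} = -oo are built into the
   KKT indicators kkt2 and kkt5 below (the only places they matter). *)
From HB Require Import structures.
From mathcomp Require Import all_boot all_order all_algebra.
Set Implicit Arguments. Unset Strict Implicit. Unset Printing Implicit Defensive.
Import Order.TTheory GRing.Theory Num.Theory.
Local Open Scope ring_scope.

Section ESGS.
Variables (R : realFieldType) (n k : nat) (r : R) (x : nat -> R).

Definition S_alpha (k0 : nat) : R := \sum_(1 <= i < k0.+1) x i - r.
Definition S_beta (k0 k1 : nat) : R := \sum_(k0.+1 <= i < k1.+1) x i.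
Definition rho (k0 k1 : nat) : R :=
  k0%:R * (k1%:R - k0%:R) + (k%:R - k0%:R) ^+ 2.
Definition theta (k0 k1 : nat) : R :=
  (k0%:R * S_beta k0 k1 - (k%:R - k0%:R) * S_alpha k0) / rho k0 k1.
Definition lambda (k0 k1 : nat) : R :=
  ((k%:R - k0%:R) * S_beta k0 k1 + (k1%:R - k0%:R) * S_alpha k0) / rho k0 k1.

Definition kkt1 (k0 k1 : nat) : bool := 0 < lambda k0 k1.
Definition kkt2 (k0 k1 : nat) : bool :=
  (k0 == 0)%N || (theta k0 k1 + lambda k0 k1 < x k0).
Definition kkt3 (k0 k1 : nat) : bool := x k0.+1 <= theta k0 k1 + lambda k0 k1.
Definition kkt4 (k0 k1 : nat) : bool := theta k0 k1 <= x k1.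
Definition kkt5 (k0 k1 : nat) : bool :=
  (k1 == n)%N || (x k1.+1 < theta k0 k1).

Inductive esgs_traj : nat -> nat -> Prop :=
| esgs_start : esgs_traj k.-1 k
| esgs_inc_k1 k0 k1 : esgs_traj k0 k1 -> ~~ (kkt2 k0 k1 && kkt5 k0 k1) ->
    kkt2 k0 k1 -> esgs_traj k0 k1.+1
| esgs_dec_k0 k0 k1 : esgs_traj k0 k1 -> ~~ (kkt2 k0 k1 && kkt5 k0 k1) ->
    ~~ kkt2 k0 k1 -> esgs_traj k0.-1 k1.
End ESGS.

From HB Require Import structures.
From mathcomp Require Import all_boot all_order all_algebra.
From mathcomp Require Import ring lra.
Import Order.TTheory GRing.Theory Num.Theory.
Local Open Scope ring_scope.

(* Along the trajectory, k0 < k <= k1 and the three conditions kkt1, kkt3,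
   kkt4 form an invariant.  At the start (k-1, k) one has theta + lambda = x_k
   and lambda = (x_1 + ... + x_k - r) / rho > 0.  A step is taken only when a
   KKT condition fails, and its slack is nonnegative: x_{k1+1} - theta >= 0
   when k1 grows (kkt5 fails), theta + lambda - x_{k0} >= 0 when k0 shrinks
   (kkt2 fails).  Solving the two linear equations defining theta and lambda
   again shows that each step changes lambda, theta + lambda and theta by
   nonnegative multiples of that slack, in the directions that preserve the
   invariant. *)

Section ESGSInvariant.
Variables (R : realFieldType) (n k : nat) (r : R) (x : nat -> R).

Local Notation S_alpha := (S_alpha r x).
Local Notation S_beta := (S_beta x).
Local Notation rho := (rho R k).
Local Notation theta := (theta k r x).
Local Notation lambda := (lambda k r x).

Definition kkt134 (k0 k1 : nat) : Prop :=
  [/\ kkt1 k r x k0 k1, kkt3 k r x k0 k1 & kkt4 k r x k0 k1].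

Lemma S_alphaS k0 : S_alpha k0.+1 = S_alpha k0 + x k0.+1.
Proof. by rewrite /S_alpha big_nat_recr //= addrAC. Qed.

Lemma S_beta_recr {k0 k1} :
  (k0 <= k1)%N -> S_beta k0 k1.+1 = S_beta k0 k1 + x k1.+1.
Proof. by move=> le_k01; rewrite /S_beta big_nat_recr. Qed.

Lemma S_beta_recl {k0 k1} :
  (k0 < k1)%N -> S_beta k0 k1 = x k0.+1 + S_beta k0.+1 k1.
Proof. by move=> lt_k01; rewrite /S_beta big_ltn. Qed.

Lemma rho_gt0 {k0 k1} : (k0 < k <= k1)%N -> 0 < rho k0 k1.
Proof.
case/andP=> lt_k0k le_kk1; rewrite /rho.
have : k0%:R < k%:R :> R by rewrite ltr_nat.
have : k%:R <= k1%:R :> R by rewrite ler_nat.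
have : 0 <= k0%:R :> R by [].
nra.
Qed.

Lemma rho_neq0 {k0 k1} : (k0 < k <= k1)%N -> rho k0 k1 != 0.
Proof. by move/rho_gt0/lt0r_neq0. Qed.

Lemma startE {k0} : k = k0.+1 ->
  lambda k0 k = S_alpha k / rho k0 k /\ theta k0 k + lambda k0 k = x k.
Proof.
move=> kE; have : rho k0 k != 0 by rewrite rho_neq0 // kE ltnSn.
rewrite /lambda /theta /rho kE S_alphaS /S_beta big_nat1 -!natr1 => nz.
by split; field.
Qed.

Lemma incr_k1E {k0 k1} : (k0 < k <= k1)%N ->
  let slack := x k1.+1 - theta k0 k1 in
  [/\ lambda k0 k1.+1 = lambda k0 k1 + (k%:R - k0%:R) * slack / rho k0 k1.+1,
      theta k0 k1.+1 + lambda k0 k1.+1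
        = theta k0 k1 + lambda k0 k1 + k%:R * slack / rho k0 k1.+1
    & x k1.+1 - theta k0 k1.+1 = rho k0 k1 * slack / rho k0 k1.+1].
Proof.
case/andP=> lt_k0k le_kk1; have le_k01 := leq_trans (ltnW lt_k0k) le_kk1.
have : rho k0 k1 != 0 by rewrite rho_neq0 // lt_k0k.
have : rho k0 k1.+1 != 0 by rewrite rho_neq0 // lt_k0k leqW.
rewrite /lambda /theta /rho (S_beta_recr le_k01) -!natr1 => nz1 nz0.
by split; field; rewrite ?nz0 ?nz1.
Qed.

Lemma decr_k0E {k0 k1} : (k0.+1 < k <= k1)%N ->
  let slack := theta k0.+1 k1 + lambda k0.+1 k1 - x k0.+1 in
  [/\ lambda k0 k1 = lambda k0.+1 k1 + (k1%:R - k%:R) * slack / rho k0 k1,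
      theta k0 k1 = theta k0.+1 k1 - k%:R * slack / rho k0 k1
    & theta k0 k1 + lambda k0 k1 - x k0.+1
        = ((k%:R - k0.+1%:R) * k%:R + k0.+1%:R * (k1%:R - k%:R)) * slack
          / rho k0 k1].
Proof.
case/andP=> lt_k0k le_kk1; have lt_k01 := leq_trans (ltnW lt_k0k) le_kk1.
have : rho k0.+1 k1 != 0 by rewrite rho_neq0 // lt_k0k.
have : rho k0 k1 != 0 by rewrite rho_neq0 // ltnW.
rewrite /lambda /theta /rho S_alphaS (S_beta_recl lt_k01) -!natr1 => nz1 nz0.
by split; field; rewrite ?nz0 ?nz1.
Qed.

Lemma kkt134_start : (0 < k)%N -> 0 < S_alpha k -> kkt134 k.-1 k.
Proof.
move=> k_gt0 S_gt0; have kE : k = k.-1.+1 by rewrite prednK.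
have [lE tlE] := startE kE.
have bounds : (k.-1 < k <= k)%N by rewrite leqnn andbT ltn_predL.
have l_gt0 : 0 < lambda k.-1 k by rewrite lE divr_gt0 // rho_gt0.
rewrite /kkt134 /kkt1 /kkt3 /kkt4 -kE tlE l_gt0; split => //; lra.
Qed.

Lemma kkt134_incr_k1 k0 k1 : (k0 < k <= k1)%N ->
  kkt134 k0 k1 -> theta k0 k1 <= x k1.+1 -> kkt134 k0 k1.+1.
Proof.
move=> bounds [l_gt0 kkt3_0 kkt4_0] slack_ge0.
have [lE tlE tE] := incr_k1E bounds.
have rho_ge0 : 0 <= rho k0 k1 by rewrite ltW // rho_gt0.
have rhoS_gt0 : 0 < rho k0 k1.+1.
  by case/andP: bounds => lt_k0k le_kk1; rewrite rho_gt0 // lt_k0k leqW.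
have k0_le_k : k0%:R <= k%:R :> R by case/andP: bounds => /ltnW; rewrite ler_nat.
set slack := x k1.+1 - theta k0 k1 in lE tlE tE.
have weighted_ge0 c : 0 <= c -> 0 <= c * slack / rho k0 k1.+1.
  by move=> c_ge0; rewrite divr_ge0 ?mulr_ge0 ?subr_ge0 // ltW.
have := weighted_ge0 _ (ler0n R k); have := weighted_ge0 _ rho_ge0.
have := weighted_ge0 (k%:R - k0%:R).
rewrite /kkt134 /kkt1 /kkt3 /kkt4 in kkt3_0 kkt4_0 l_gt0 *.
rewrite subr_ge0; split; lra.
Qed.

Lemma kkt134_decr_k0 k0 k1 : (k0.+1 < k <= k1)%N ->
  kkt134 k0.+1 k1 -> x k0.+1 <= theta k0.+1 k1 + lambda k0.+1 k1 ->
  kkt134 k0 k1.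
Proof.
move=> bounds [l_gt0 kkt3_0 kkt4_0] slack_ge0.
have [lE tE tlE] := decr_k0E bounds.
have rho_pos : 0 < rho k0 k1.
  by case/andP: bounds => lt_k0k le_kk1; rewrite rho_gt0 // ltnW.
case/andP: bounds; rewrite -(ltr_nat R) -(ler_nat R) => lt_k0k le_kk1.
set slack := theta k0.+1 k1 + lambda k0.+1 k1 - x k0.+1 in lE tE tlE.
have weighted_ge0 c : 0 <= c -> 0 <= c * slack / rho k0 k1.
  by move=> c_ge0; rewrite divr_ge0 ?mulr_ge0 ?subr_ge0 // ltW.
have := weighted_ge0 _ (ler0n R k); have := weighted_ge0 (k1%:R - k%:R).
have : 0 <= (k%:R - k0.+1%:R) * k%:R + k0.+1%:R * (k1%:R - k%:R) :> R.
  by have := ler0n R k0.+1; nra.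
move/weighted_ge0.
rewrite /kkt134 /kkt1 /kkt3 /kkt4 in kkt3_0 kkt4_0 l_gt0 *.
rewrite !subr_ge0; split; lra.
Qed.

Lemma esgs_traj_bounds {k0 k1} :
  (0 < k)%N -> esgs_traj n k r x k0 k1 -> (k0 < k <= k1)%N.
Proof.
move=> k_gt0; elim=> {k0 k1} [|k0 k1 _ + _ _|k0 k1 _ + _ _].
- by rewrite leqnn andbT ltn_predL.
- by case/andP=> -> /leqW.
- by case/andP=> lt_k0k ->; rewrite andbT (leq_ltn_trans (leq_pred k0)).
Qed.

Lemma esgs_traj_kkt134 k0 k1 :
  (0 < k)%N -> 0 < S_alpha k -> esgs_traj n k r x k0 k1 -> kkt134 k0 k1.
Proof.
move=> k_gt0 S_gt0.
elim=> {k0 k1} [|k0 k1 traj IH stop kkt2_0|k0 k1 traj IH _ not_kkt2].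
- exact: kkt134_start.
- apply: kkt134_incr_k1 (esgs_traj_bounds k_gt0 traj) IH _.
  by move: stop; rewrite kkt2_0 /kkt5 negb_or -leNgt => /andP[].
- move: not_kkt2; rewrite /kkt2 negb_or -leNgt.
  case: k0 traj IH => [//|k0] traj IH /= slack_ge0.
  exact: kkt134_decr_k0 (esgs_traj_bounds k_gt0 traj) IH slack_ge0.
Qed.

End ESGSInvariant.

Theorem lemma3p4 (R : realFieldType) (n k : nat) (r : R) (x : nat -> R) :
  (2 <= n)%N -> (1 <= k <= n)%N ->
  (forall i j : nat, (1 <= i)%N -> (i <= j)%N -> (j <= n)%N -> x j <= x i) ->
  r < \sum_(1 <= i < k.+1) x i ->
  forall k0 k1 : nat, esgs_traj n k r x k0 k1 ->
    [/\ kkt1 k r x k0 k1, kkt3 k r x k0 k1 & kkt4 k r x k0 k1].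
Proof.
move=> _ /andP[k_gt0 _] _ sum_gt_r k0 k1.
by apply: esgs_traj_kkt134 k_gt0 _; rewrite /S_alpha subr_gt0.
Qed.
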